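(* For every $m\ge0$ and $n\ge1$ there is an injective map from $Q_2(m,n)$ to $P_2(-m,n)$.
   Context: Partitions: $\lambda_1\ge\cdots\ge\lambda_\ell>0$, $\ell(\lambda)=\ell$, $\lambda_i=0$ for $i>\ell$ (so $\alpha_1=0$ if $\alpha=\emptyset$), $s(\lambda)$ the smallest part with $s(\emptyset)=+\infty$. Rank $=\lambda_1-\ell$; rank-set $=[-\lambda_1,1-\lambda_2,\dots,\ell-1-\lambda_\ell,\ell,\ell+1,\dots]$. $Q(m,n)$: partitions of $n$ whose rank-set contains $m$; $P(-m,n)$: partitions of $n$ with rank $\ge-m$. $m$-Durfee rectangle symbol $(\alpha,\beta)_{(m+j)\times j}$ of $\lambda$: $j\ge0$ is the largest integer with $\lambda_{m+j}\ge j$; $\alpha$ is the conjugate of $(\lambda_1-j,\dots,\lambda_{m+j}-j)$ (columns to the right of the $(m+j)\times j$ rectangle) and $\beta=(\lambda_{m+j+1},\lambda_{m+j+2},\dots)$ (rows below it); $|\lambda|=|\alpha|+|\beta|+j(m+j)$. $Q_2(m,n)$ is the set of $\lambda\in Q(m,n)$ whose symbol $(\alpha,\beta)_{(m+j)\times j}$ has $j\ge1$, $\ell(\beta)\ge\ell(\alpha)$ and $\alpha_1<m+j$. $P_2(-m,n)$ is the set of $\mu\in P(-m,n)$ whose symbol $(\gamma,\delta)_{(m+j')\times j'}$ has $j'\ge1$ and $\delta_1=j'-1$. *)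

From mathcomp Require Import all_boot all_order all_algebra.
Set Implicit Arguments. Unset Strict Implicit. Unset Printing Implicit Defensive.
Import GRing.Theory Num.Theory.
Local Open Scope ring_scope.
Local Open Scope nat_scope.

Definition is_partition (l : seq nat) : bool :=
  sorted geq l && all (fun x => 0 < x) l.

Definition partition_of (n : nat) (l : seq nat) : bool :=
  is_partition l && (sumn l == n).

(* lambda_i, 1-indexed, with lambda_i = 0 for i > l(lambda) *)
Definition part (l : seq nat) (i : nat) : nat := nth 0 l i.-1.

Definition rank (l : seq nat) : int := ((part l 1)%:Z - (size l)%:Z)%R.

(* z belongs to the rank-set [-l_1, 1-l_2, ..., ell-1-l_ell, ell, ell+1, ...] *)
Definition in_rank_set (z : int) (l : seq nat) : bool :=
  ((size l)%:Z <= z)%R ||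
  has (fun i => ((i%:Z - (part l i.+1)%:Z)%R == z)) (iota 0 (size l)).

(* Q(m,n) and P(-m,n) *)
Definition Qset (m n : nat) (l : seq nat) : bool :=
  partition_of n l && in_rank_set (Posz m) l.
Definition Pset (m n : nat) (l : seq nat) : bool :=
  partition_of n l && (- (Posz m) <= rank l)%R.

Definition conjugate (s : seq nat) : seq nat :=
  [seq count (fun x => k <= x) s | k <- iota 1 (foldr maxn 0 s)].

(* m-Durfee rectangle: j is the largest j >= 0 with lambda_{m+j} >= j
   (j = 0 always qualifies; any j >= 1 qualifying satisfies j <= l(lambda)). *)
Definition durfee_j (m : nat) (l : seq nat) : nat :=
  foldr maxn 0 [seq j <- iota 0 (size l).+1 | (j == 0) || (j <= part l (m + j))].

Definition durfee_alpha (m : nat) (l : seq nat) : seq nat :=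
  let j := durfee_j m l in
  conjugate [seq part l i - j | i <- iota 1 (m + j)].

Definition durfee_beta (m : nat) (l : seq nat) : seq nat :=
  drop (m + durfee_j m l) l.

(* first part, with alpha_1 = 0 for the empty partition *)
Definition first_part (s : seq nat) : nat := nth 0 s 0.

Definition Q2 (m n : nat) (l : seq nat) : bool :=
  [&& Qset m n l,
      1 <= durfee_j m l,
      size (durfee_alpha m l) <= size (durfee_beta m l) &
      first_part (durfee_alpha m l) < m + durfee_j m l].

Definition P2 (m n : nat) (mu : seq nat) : bool :=
  [&& Pset m n mu,
      1 <= durfee_j m mu &
      first_part (durfee_beta m mu) == (durfee_j m mu).-1].

From mathcomp Require Import all_boot all_order all_algebra.
From mathcomp Require Import zify.

Set Implicit Arguments.
Unset Strict Implicit.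
Unset Printing Implicit Defensive.

(* For lambda in Q_2(m,n) with m-Durfee rectangle (m+j) x j, the three
   defining conditions of Q_2 pin down the shape of lambda around the
   rectangle: alpha_1 < m+j forces lambda_{m+j} = j, then m belonging to
   the rank set forces lambda_{m+j+1} = j, and l(alpha) <= l(beta) reads
   lambda_1 + m <= l(lambda).  Hence lambda = A ++ j :: D, where A holds the
   first m+j-1 rows (all >= j) and D is a partition with largest part j.

   The map deletes the row j of lambda, removes the first column of D and
   puts a new first row l(lambda) - m on top.  The size is preserved, the
   rank of the image is >= -m, the m-Durfee rectangle is unchanged and the
   row just below it is j-1, so the image lies in P_2(-m,n).  It is
   injective because j and l(lambda) can be read off the image, hence so
   can A, the removed column of D, and D itself. *)

Lemma maxseq_ub s x : x \in s -> x <= foldr maxn 0 s.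
Proof. by move=> xs; rewrite foldrE; exact: leq_bigmax_seq. Qed.

Lemma maxseq_lub s k : (forall x, x \in s -> x <= k) -> foldr maxn 0 s <= k.
Proof. by move=> le_k; rewrite foldrE; apply/bigmax_leqP_seq => x xs _; exact: le_k. Qed.

Lemma maxseq_mem s : s != [::] -> foldr maxn 0 s \in s.
Proof.
elim: s => // y s IH _; rewrite in_cons [foldr _ _ (y :: s)]/=.
case: s IH => [|z s] IH; first by rewrite maxn0 eqxx.
by case: leqP => _; [rewrite IH ?orbT | rewrite eqxx].
Qed.

Lemma geq_transitive : transitive geq.
Proof. exact: rev_trans leq_trans. Qed.

Lemma part_gt0_size l k : 0 < part l k -> k.-1 < size l.
Proof.
move=> part_pos; rewrite ltnNge; apply/negP => /(nth_default 0) l_end.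
by rewrite /part l_end in part_pos.
Qed.

Section Nonincreasing.

Variable l : seq nat.
Hypothesis l_sorted : sorted geq l.

Lemma nth_geq i k : i <= k -> nth 0 l k <= nth 0 l i.
Proof.
move=> le_ik; case: (ltnP k (size l)) => [lt_k|le_k]; last by rewrite nth_default.
apply: (sorted_leq_nth geq_transitive (@leqnn) 0 l_sorted) => //.
by rewrite inE (leq_ltn_trans le_ik lt_k).
Qed.

Lemma part_geq i k : i <= k -> part l k <= part l i.
Proof. by move=> le_ik; apply: nth_geq; lia. Qed.

Lemma part1_max y : y \in l -> y <= part l 1.
Proof. by move=> yl; rewrite -(nth_index 0 yl); apply: nth_geq. Qed.

End Nonincreasing.

Lemma durfee_j_spec m l :
  durfee_j m l = 0 \/ durfee_j m l <= part l (m + durfee_j m l).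
Proof.
have : durfee_j m l \in [seq j <- iota 0 (size l).+1 | (j == 0) || (j <= part l (m + j))].
  by apply: maxseq_mem.
by rewrite mem_filter => /andP[/orP[/eqP j0|le_j] _]; [left | right].
Qed.

(* Maximality of j: lambda_{m+j+1} <= j, otherwise j+1 would qualify. *)
Lemma durfee_j_max m l : part l (m + durfee_j m l + 1) <= durfee_j m l.
Proof.
rewrite leqNgt; apply/negP => lt_j.
have j1_size : m + durfee_j m l < size l.
  by have := part_gt0_size (leq_ltn_trans (leq0n _) lt_j); lia.
have : (durfee_j m l).+1 <= durfee_j m l.
  apply: maxseq_ub; rewrite mem_filter mem_iota; apply/andP; split; last by lia.
  by apply/orP; right; move: lt_j; rewrite addn1 addnS.
by rewrite ltnn.
Qed.

Lemma durfee_j_eq m l j : sorted geq l -> 1 <= j -> j <= size l ->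
  j <= part l (m + j) -> part l (m + j + 1) <= j -> durfee_j m l = j.
Proof.
move=> l_sorted j_gt0 j_size le_j ge_j; apply/eqP; rewrite eqn_leq; apply/andP; split.
  apply: maxseq_lub => x; rewrite mem_filter => /andP[/orP[/eqP->//|le_x] _].
  rewrite leqNgt; apply/negP => lt_jx.
  have : part l (m + x) <= part l (m + j + 1) by apply: part_geq => //; lia.
  lia.
apply: maxseq_ub; rewrite mem_filter mem_iota le_j orbT /=; lia.
Qed.

(* Removing the first column of a partition: every part decreases by one
   and the parts equal to 1 disappear. *)
Definition shave (d : seq nat) : seq nat := [seq x.-1 | x <- d & 1 < x].

(* The removed column has one cell per part. *)
Lemma sumn_shave d : all (fun x => 0 < x) d -> sumn d = sumn (shave d) + size d.
Proof.
elim: d => //= x d IH /andP[x_pos d_pos]; rewrite /shave /=.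
by case: ltnP => x_gt1 /=; rewrite -/(shave d) IH //; lia.
Qed.

Lemma shave_sorted d : sorted geq d -> sorted geq (shave d).
Proof.
move=> d_sorted; rewrite sorted_map; apply: (@sub_sorted _ geq).
  by move=> x y /=; lia.
exact: sorted_filter geq_transitive _ _ d_sorted.
Qed.

Lemma shave_small d : all (fun x => x <= 1) d -> shave d = [::].
Proof.
by elim: d => //= x d IH /andP[le_x small]; rewrite /shave /= ltnNge le_x /= -/(shave d) IH.
Qed.

Lemma shave_head d j : nth 0 d 0 = j -> all (fun x => x <= j) d ->
  nth 0 (shave d) 0 = j.-1.
Proof.
case: d => [|x d] /= <- //; rewrite /shave /= => /andP[_ le_x].
case: ifP => //= /negbT; rewrite -leqNgt => x_small.
rewrite -/(shave d) shave_small /=; first lia.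
by apply/allP => y yd; have := allP le_x y yd; lia.
Qed.

Lemma shaveK d : is_partition d ->
  d = [seq x.+1 | x <- shave d] ++ nseq (size d - size (shave d)) 1.
Proof.
rewrite /is_partition (sorted_pairwise geq_transitive).
elim: d => //= x d IH /andP[/andP[ge_x d_pw] /andP[x_pos d_pos]].
move: IH; rewrite d_pw d_pos => /(_ isT) IH.
rewrite /shave /=; case: ifP => [lt1x | /negbT]; rewrite -/(shave d) /=.
  by rewrite subSS -IH prednK.
rewrite -leqNgt => x_small; have x1 : x = 1 by lia.
have d_small : all (fun y => y <= 1) d.
  by apply/allP => y yd; have /= := allP ge_x y yd; lia.
rewrite shave_small //= x1; congr (_ :: _); apply/all_pred1P/allP => y yd.
by have := allP d_small y yd; have := allP d_pos y yd; move=> /= ? ?; apply/eqP; lia.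
Qed.

Lemma shave_inj d1 d2 : is_partition d1 -> is_partition d2 ->
  size d1 = size d2 -> shave d1 = shave d2 -> d1 = d2.
Proof.
move=> d1_part d2_part size_eq shave_eq.
by rewrite (shaveK d1_part) (shaveK d2_part) size_eq shave_eq.
Qed.

Lemma is_partition_drop k l : is_partition l -> is_partition (drop k l).
Proof.
case/andP=> l_sorted l_pos; rewrite /is_partition drop_sorted //=.
by apply/allP => x /mem_drop; exact: allP l_pos x.
Qed.

Lemma size_conjugate s : size (conjugate s) = foldr maxn 0 s.
Proof. by rewrite size_map size_iota. Qed.

Lemma first_part_conjugate s :
  first_part (conjugate s) = count (fun x => 0 < x) s.
Proof.
rewrite /first_part /conjugate; case max_s: (foldr maxn 0 s) => [|M] //=.
apply/esym/eqP; rewrite eqn0Ngt -has_count; apply/hasPn => x xs.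
by have := maxseq_ub xs; rewrite max_s -leqNgt.
Qed.

Section Q2Shape.

Variables (m n : nat) (l : seq nat).
Hypothesis l_Q2 : Q2 m n l.

Local Notation j := (durfee_j m l).

Lemma Q2_partition : partition_of n l.
Proof. by case/and4P: l_Q2 => /andP[]. Qed.

Lemma Q2_sorted : sorted geq l.
Proof. by case/andP: Q2_partition => /andP[]. Qed.

Lemma Q2_j_gt0 : 0 < j.
Proof. by case/and4P: l_Q2. Qed.

(* alpha_1 < m+j means some of the first m+j rows has no cell right of the
   rectangle, so lambda_{m+j} = j. *)
Lemma Q2_rect_row : part l (m + j) = j.
Proof.
have [j0|le_j] := durfee_j_spec m l; first by have := Q2_j_gt0; lia.
apply/eqP; rewrite eqn_leq le_j andbT.
have : ~~ all (fun x => 0 < x) [seq part l i - j | i <- iota 1 (m + j)].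
  case/and4P: l_Q2 => _ _ _; rewrite /durfee_alpha /= first_part_conjugate.
  by rewrite all_count size_map size_iota neq_ltn => ->.
case/allPn => _ /mapP[i /[!mem_iota] /andP[_ le_i] ->].
rewrite -leqNgt leqn0 subn_eq0 => le_j_i.
by apply: (leq_trans _ le_j_i); apply: part_geq; [exact: Q2_sorted | lia].
Qed.

Lemma Q2_rect_size : m + j <= size l.
Proof.
have := @part_gt0_size l (m + j); rewrite Q2_rect_row Q2_j_gt0 => /(_ isT).
by have := Q2_j_gt0; lia.
Qed.

(* m lies in the rank set, i.e. lambda_{k+1} = k - m for some k; comparing
   with the rectangle forces k >= m+j, whence lambda_{m+j+1} = j. *)
Lemma Q2_next_row : part l (m + j + 1) = j.
Proof.
apply/eqP; rewrite eqn_leq durfee_j_max /=.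
have : in_rank_set (Posz m) l by case/and4P: l_Q2 => /andP[].
case/orP => [|/hasP[k]].
  by have := Q2_rect_size; have := Q2_j_gt0; lia.
move=> /[!mem_iota] /andP[_ k_lt] /eqP k_eq.
have := Q2_rect_row; have [le_k|lt_k] := leqP k.+1 (m + j).
  by have := part_geq Q2_sorted le_k; lia.
by have := @part_geq l Q2_sorted (m + j + 1) k.+1 (_ : _ <= _); lia.
Qed.

(* l(alpha) = lambda_1 - j and l(beta) = l(lambda) - m - j. *)
Lemma Q2_first_row : part l 1 + m <= size l.
Proof.
case/and4P: l_Q2 => _ _ + _; rewrite /durfee_alpha /durfee_beta /=.
rewrite size_conjugate size_drop.
have rect_pos : 1 <= m + j by have := Q2_j_gt0; lia.
have one_in : 1 \in iota 1 (m + j) by rewrite mem_iota; lia.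
have /= := maxseq_ub (map_f (fun i => part l i - j) one_in).
have := part_geq Q2_sorted rect_pos; rewrite Q2_rect_row.
by have := Q2_rect_size; lia.
Qed.

Lemma Q2_split : l = take (m + j).-1 l ++ j :: drop (m + j) l.
Proof.
have size_gt : (m + j).-1 < size l by have := Q2_rect_size; have := Q2_j_gt0; lia.
rewrite -{1}(cat_take_drop (m + j).-1 l) (drop_nth 0 size_gt).
rewrite prednK ?addn_gt0 ?Q2_j_gt0 ?orbT //.
by congr (_ ++ _ :: _); exact: Q2_rect_row.
Qed.

Lemma Q2_below : nth 0 (drop (m + j) l) 0 = j.
Proof. by rewrite nth_drop addn0; have := Q2_next_row; rewrite /part addn1. Qed.

End Q2Shape.

Section Image.

Variables (m j : nat) (A D : seq nat).
Local Notation l := (A ++ j :: D).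
Local Notation mu := ((size l - m) :: A ++ shave D).

Hypotheses (l_part : is_partition l) (j_gt0 : 0 < j)
  (size_A : size A = (m + j).-1) (D_head : nth 0 D 0 = j)
  (first_row : part l 1 + m <= size l).

Let l_sorted : sorted geq l. Proof. by case/andP: l_part. Qed.

Lemma size_split : size l = m + j + size D.
Proof. by rewrite size_cat /= size_A; lia. Qed.

Lemma parts_le_new_row y : y \in l -> y <= size l - m.
Proof. by move/(part1_max l_sorted); lia. Qed.

Lemma split_rows :
  [/\ forall y, y \in A -> j <= y, forall w, w \in D -> w <= j,
    sorted geq A & is_partition D].
Proof.
have := l_sorted; rewrite (sorted_pairwise geq_transitive) pairwise_cat pairwise_cons.
case/and3P=> A_jD A_pw /andP[j_D D_pw]; split.
- by move=> y yA; apply: (allrelP A_jD) => //; exact: mem_head.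
- exact/allP.
- by rewrite (sorted_pairwise geq_transitive).
- rewrite /is_partition (sorted_pairwise geq_transitive) D_pw /=.
  by apply/allP => w wD; apply: (allP (proj2 (andP l_part))); rewrite mem_cat in_cons wD !orbT.
Qed.

Lemma image_sorted : sorted geq mu.
Proof.
have [A_ge D_le A_sorted /andP[D_sorted _]] := split_rows.
rewrite (sorted_pairwise geq_transitive) pairwise_cons pairwise_cat.
rewrite -!(sorted_pairwise geq_transitive) shave_sorted // A_sorted !andbT.
apply/andP; split.
  apply/allP => y; rewrite mem_cat => /orP[yA | /mapP[w]].
    by apply: parts_le_new_row; rewrite mem_cat yA.
  rewrite mem_filter => /andP[_ wD] ->; have := parts_le_new_row (_ : w \in l).
  by rewrite mem_cat in_cons wD !orbT => /(_ isT) /=; lia.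
apply/allrelP => y z yA /mapP[w]; rewrite mem_filter => /andP[_ wD] ->.
by have := A_ge y yA; have := D_le w wD; rewrite /=; lia.
Qed.

(* The new first row l(lambda) - m = j + l(D) pays exactly for the deleted
   row j and the shaved column of D. *)
Lemma image_partition : partition_of (sumn l) mu.
Proof.
have [A_ge _ _ /andP[_ D_pos]] := split_rows.
rewrite /partition_of /is_partition image_sorted /=; apply/andP; split.
  rewrite size_split all_cat; apply/and3P; split; first lia.
    by apply/allP => y /A_ge; lia.
  by apply/allP => z /mapP[w]; rewrite mem_filter => /andP[w_gt1 _] ->; lia.
rewrite !sumn_cat /= (sumn_shave D_pos) size_split; apply/eqP; lia.
Qed.

Lemma image_below : nth 0 mu (m + j) = j.-1.
Proof.
have [_ D_le _ _] := split_rows.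
have -> : m + j = (size A).+1 by rewrite size_A; lia.
by rewrite /= nth_cat ltnn subnn; apply: shave_head => //; exact/allP.
Qed.

(* Row m+j of the image is the last row of A (or the new first row). *)
Lemma image_rect_row : j <= part mu (m + j).
Proof.
have [A_ge _ _ _] := split_rows.
have -> : part mu (m + j) = last (size l - m) A.
  by rewrite /part -size_A -cat_cons nth_cat /= ltnSn (nth_last _ (_ :: _)).
have : last (size l - m) A \in (size l - m) :: A by exact: mem_last.
by rewrite in_cons => /orP[/eqP-> | /A_ge //]; rewrite size_split; lia.
Qed.

Lemma image_durfee : durfee_j m mu = j.
Proof.
apply: durfee_j_eq => //; first exact: image_sorted.
- by rewrite /= size_cat size_A; lia.
- exact: image_rect_row.
- by rewrite /part addn1 /= -/(nth 0 mu (m + j)) image_below; lia.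
Qed.

Lemma image_P2 : P2 m (sumn l) mu.
Proof.
have size_shave : size (shave D) <= size D by rewrite size_map size_filter count_size.
rewrite /P2 /Pset image_partition image_durfee j_gt0 /=.
rewrite /durfee_beta /first_part image_durfee nth_drop addn0 image_below eqxx andbT.
by rewrite /rank /part /= !size_cat /= size_A; lia.
Qed.

End Image.

Definition q2_to_p2 (m : nat) (l : seq nat) : seq nat :=
  let j := durfee_j m l in
  (size l - m) :: take (m + j).-1 l ++ shave (drop (m + j) l).

Lemma q2_to_p2_spec m n l : Q2 m n l ->
  P2 m n (q2_to_p2 m l) /\ durfee_j m (q2_to_p2 m l) = durfee_j m l.
Proof.
move=> l_Q2; have /andP[l_part /eqP l_sum] := Q2_partition l_Q2.
have size_A : size (take (m + durfee_j m l).-1 l) = (m + durfee_j m l).-1.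
  by rewrite size_takel //; have := Q2_rect_size l_Q2; lia.
move: l_part (Q2_first_row l_Q2); rewrite {1 2 3}(Q2_split l_Q2) => l_part first_row.
have := image_P2 l_part (Q2_j_gt0 l_Q2) size_A (Q2_below l_Q2) first_row.
have := image_durfee l_part (Q2_j_gt0 l_Q2) size_A (Q2_below l_Q2) first_row.
by rewrite -(Q2_split l_Q2) l_sum.
Qed.

Lemma q2_to_p2_inj m n l1 l2 : Q2 m n l1 -> Q2 m n l2 ->
  q2_to_p2 m l1 = q2_to_p2 m l2 -> l1 = l2.
Proof.
move=> l1_Q2 l2_Q2 same_image.
have same_j : durfee_j m l1 = durfee_j m l2.
  by rewrite -(proj2 (q2_to_p2_spec l1_Q2)) same_image (proj2 (q2_to_p2_spec l2_Q2)).
have same_size : size l1 = size l2.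
  have := Q2_first_row l1_Q2; have := Q2_first_row l2_Q2.
  by case: same_image; lia.
move: same_image; rewrite /q2_to_p2 /= same_j => -[_ /eqP].
rewrite eqseq_cat ?size_take ?same_size // => /andP[/eqP same_A /eqP same_shave].
rewrite (Q2_split l1_Q2) (Q2_split l2_Q2) same_j same_A; congr (_ ++ _ :: _).
have /andP[l1_part _] := Q2_partition l1_Q2; have /andP[l2_part _] := Q2_partition l2_Q2.
by apply: shave_inj; rewrite ?is_partition_drop ?size_drop ?same_size.
Qed.

Theorem lemma4p2 (m n : nat) : 1 <= n ->
  exists f : seq nat -> seq nat,
    (forall l, Q2 m n l -> P2 m n (f l)) /\
    (forall l1 l2, Q2 m n l1 -> Q2 m n l2 -> f l1 = f l2 -> l1 = l2).
Proof.
move=> _; exists (q2_to_p2 m); split.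
  by move=> l /q2_to_p2_spec [].
exact: q2_to_p2_inj.
Qed.
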